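(* Let $a\neq0$, $b>0$, $d$ be integers with $d$ not a perfect square, $\alpha=a+b^2\sqrt d$, $N_\alpha=a^2-b^4d$ not a perfect square, $\varepsilon=(t+u\sqrt d)/2$ in the ring of integers of $\mathbb{Q}(\sqrt d)$ with $t,u$ nonzero integers, and let $x\ne0$, $y>0$ be integers with $x+y^2\sqrt d=\alpha\varepsilon^2$. Let $r_1'=tb^2+au+2by$ and $r_1''=tb^2+au-2by$. Then $\gcd(r_1',r_1'')$ is even, unless $N_\alpha\equiv1\pmod4$ and $4\mid d$. *)

From mathcomp Require Import all_boot all_order all_algebra all_field.
Set Implicit Arguments. Unset Strict Implicit. Unset Printing Implicit Defensive.
Import Order.TTheory GRing.Theory Num.Theory.
Local Open Scope ring_scope.

Definition is_square (n : int) : Prop := exists m : int, n = m * m.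

(* sqrt d as a complex algebraic number (principal root; i*sqrt|d| if d<0) *)
Definition sqrtd (d : int) : algC := sqrtC (d%:~R).

From mathcomp Require Import all_boot all_order all_algebra all_field.
From mathcomp Require Import ring.
Set Implicit Arguments.
Unset Strict Implicit.
Unset Printing Implicit Defensive.
Import Order.TTheory GRing.Theory Num.Theory.
Local Open Scope ring_scope.

(* Since d is not a square, sqrt d is irrational, so the rational and the
   sqrt d-parts of x + y^2 sqrt d = alpha eps^2 can be compared:
   4x = a(t^2 + d u^2) + 2 b^2 d t u  and  4y^2 = 2atu + b^2 (t^2 + d u^2).
   Reading both identities modulo 4, a finite check shows that t b^2 + a u is
   even unless N_alpha = 1 mod 4 and 4 | d; r1' and r1'' differ from it by
   +-2by, so both are even. *)

Lemma sqrtdK (d : int) : sqrtd d ^+ 2 = d%:~R.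
Proof. by rewrite /sqrtd sqrtCK. Qed.

Lemma sqrtd_Aint (d : int) : sqrtd d \in Aint.
Proof.
apply: (@root_monic_Aint ('X^2 - (d%:~R)%:P)).
- by rewrite rootE !hornerE sqrtdK subrr.
- by rewrite monicXnsubC.
- by rewrite polyOverXnsubC rpred_int.
Qed.

Lemma sqrtd_Crat_square (d : int) : sqrtd d \in Crat -> is_square d.
Proof.
move=> /Cint_rat_Aint /(_ (sqrtd_Aint d)) /intrP [m hm].
by exists m; apply/eqP; rewrite -(eqr_int algC) rmorphM /= -hm -expr2 sqrtdK.
Qed.

Lemma intr_add_mul_sqrtd_eq0 (d p q : int) : ~ is_square d ->
  p%:~R + q%:~R * sqrtd d = 0 -> p = 0 /\ q = 0.
Proof.
move=> nsq E; have [q0 | qn0] := eqVneq q 0.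
  by move: E; rewrite q0 mul0r addr0 => /eqP; rewrite intr_eq0 => /eqP.
exfalso; apply/nsq/sqrtd_Crat_square.
have qC : (q%:~R : algC) != 0 by rewrite intr_eq0.
have -> : sqrtd d = - p%:~R / q%:~R.
  by rewrite -[LHS](mulfK qC) [sqrtd d * _]mulrC -[q%:~R * _](addKr p%:~R) E addr0.
by rewrite rpred_div ?rpredN ?rpred_int.
Qed.

Lemma mul_sqrtd_sqr_coords (d a b t u x y : int) : ~ is_square d ->
  (x%:~R + y%:~R * sqrtd d : algC)
    = (a%:~R + b%:~R * sqrtd d) * ((t%:~R + u%:~R * sqrtd d) / 2%:R) ^+ 2 ->
  4 * x = a * (t ^+ 2 + d * u ^+ 2) + 2 * b * d * t * u /\
  4 * y = 2 * a * t * u + b * (t ^+ 2 + d * u ^+ 2).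
Proof.
move=> nsq E; set s := sqrtd d in E *.
set P := a * _ + _; set Q := 2 * a * t * u + _.
suff [/eqP + /eqP] : 4 * x - P = 0 /\ 4 * y - Q = 0.
  by rewrite !subr_eq0 => /eqP -> /eqP ->.
apply: (intr_add_mul_sqrtd_eq0 nsq).
transitivity (4 * ((x%:~R + y%:~R * s) -
    (a%:~R + b%:~R * s) * ((t%:~R + u%:~R * s) / 2%:R) ^+ 2)
  + (s ^+ 2 - d%:~R) * (a%:~R * u%:~R ^+ 2 + 2 * b%:~R * t%:~R * u%:~R
                         + b%:~R * u%:~R ^+ 2 * s) : algC).
  by rewrite /P /Q /s; field.
by rewrite E sqrtdK !subrr mulr0 mul0r addr0.
Qed.

Lemma intr_Zp_eq0 (p : nat) (z : int) :
  (1 < p)%N -> ((z%:~R : 'Z_p) == 0) = (p %| z)%Z.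
Proof.
move=> p_gt1; case: z => n; rewrite ?NegzE ?mulrNz ?oppr_eq0 ?rpredN;
  by rewrite -val_eqE /= val_Zp_nat.
Qed.

Lemma intr_Zp_eq (p : nat) (m n : int) :
  (1 < p)%N -> ((m%:~R : 'Z_p) == n%:~R) = (m == n %[mod p])%Z.
Proof. by move=> p_gt1; rewrite -subr_eq0 -rmorphB intr_Zp_eq0 // eqz_mod_dvd. Qed.

Lemma Z4_even_tb2_au (A B D T U : 'Z_4) :
  A * (T ^+ 2 + D * U ^+ 2) + 2 * B ^+ 2 * D * T * U == 0 ->
  2 * A * T * U + B ^+ 2 * (T ^+ 2 + D * U ^+ 2) == 0 ->
  ~~ ((A ^+ 2 - B ^+ 4 * D == 1) && (D == 0)) ->
  2 * (T * B ^+ 2 + A * U) == 0.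
Proof. by move: A B D T U; do 5![case=> [[|[|[|[|//]]]] ?]]. Qed.

Lemma even_tb2_au (a b d t u : int) :
  (4 %| a * (t ^+ 2 + d * u ^+ 2) + 2 * b ^+ 2 * d * t * u)%Z ->
  (4 %| 2 * a * t * u + b ^+ 2 * (t ^+ 2 + d * u ^+ 2))%Z ->
  ~ (((a ^+ 2 - b ^+ 4 * d) %% 4)%Z = 1 /\ (4 %| d)%Z) ->
  (2 %| t * b ^+ 2 + a * u)%Z.
Proof.
have Z4_eq0 z : ((z%:~R : 'Z_4) == 0) = (4 %| z)%Z by exact: intr_Zp_eq0.
move=> h1 h2 hN; rewrite -!Z4_eq0 !(rmorphD, rmorphM, rmorphXn) /= in h1 h2.
rewrite -(@dvdz_mul2l 2) // -[(2 * 2)%Z]/4%Z -Z4_eq0 !(rmorphD, rmorphM, rmorphXn) /=.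
apply: Z4_even_tb2_au h1 h2 _; apply/negP => /andP [N1 D0]; apply: hN.
split; last by rewrite -Z4_eq0.
rewrite -[X in _ = X]/(1 %% 4)%Z; apply/eqP; rewrite -intr_Zp_eq //.
by rewrite !(rmorphB, rmorphM, rmorphXn) /=.
Qed.

Theorem lemma3p4 (a b d t u x y : int) :
  a != 0 -> 0 < b -> ~ is_square d ->
  ~ is_square (a ^+ 2 - b ^+ 4 * d) ->
  t != 0 -> u != 0 ->
  ((t%:~R + u%:~R * sqrtd d) / 2%:R : algC) \in Aint ->
  x != 0 -> 0 < y ->
  (x%:~R + (y ^+ 2)%:~R * sqrtd d : algC)
    = (a%:~R + (b ^+ 2)%:~R * sqrtd d) * ((t%:~R + u%:~R * sqrtd d) / 2%:R) ^+ 2 ->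
  let r1' := t * b ^+ 2 + a * u + 2 * b * y in
  let r1'' := t * b ^+ 2 + a * u - 2 * b * y in
  ~ (((a ^+ 2 - b ^+ 4 * d) %% 4)%Z = 1 /\ (4 %| d)%Z) ->
  (2 %| gcdz r1' r1'')%Z.
Proof.
move=> _ _ nsq _ _ _ _ _ _ E r1' r1'' hN.
have [hx hy] := mul_sqrtd_sqr_coords nsq E.
have w_even : (2 %| t * b ^+ 2 + a * u)%Z.
  by apply: even_tb2_au hN; [rewrite -hx | rewrite -hy]; apply: dvdz_mulr.
have two_by_even : (2 %| 2 * b * y)%Z by rewrite -mulrA; apply: dvdz_mulr.
by rewrite dvdz_gcd /r1' /r1'' rpredD ?rpredB.
Qed.
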